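(* Let $G$ be a subgroup of $K^*$ and let $K^*$ act on the set of left cosets $K^*/G$ by ${}^{a}(bG)=(ab)G$. Then: (1) A function $f\colon K^*/G\to K$ is skew convex if and only if there exists a right $G$-linear map $\phi_f\colon K\to K$ such that $f(xG)=\phi_f(x)x^{-1}$ for all $x\in K^*$; such $\phi_f$ is unique. (2) The assignment $f\mapsto\phi_f$ is a ring isomorphism from $\mathcal S(K^*/G)$ onto the ring $\mathrm{End}(K_G)$ of right $G$-linear maps $K\to K$ (with pointwise addition and composition as multiplication).
   Context: Let $K$ be a skew field, $K^*=K\setminus\{0\}$. For a nonempty set $Z$ with a left $K^*$-action $(a,z)\mapsto{}^{a}z$, $\mathcal F(Z)$ is the set of functions $Z\to K$ with pointwise addition; the constant function with value $a\in K$ is denoted $a$. The skew product is $(f\diamond g)(z)=f({}^{g(z)}z)\,g(z)$ if $g(z)\neq0$ and $0$ if $g(z)=0$. A function $f$ is skew convex if $f\diamond(a+b)=f\diamond a+f\diamond b$ for all $a,b\in K$; $\mathcal S(Z)$ is the ring of skew-convex functions on $Z$ under pointwise addition and $\diamond$. A map $\phi\colon K\to K$ is right $G$-linear if $\phi(a-b)=\phi(a)-\phi(b)$ and $\phi(ac)=\phi(a)c$ for all $a,b\in K$, $c\in G$. *)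

From HB Require Import structures.
From mathcomp Require Import all_boot all_order all_algebra.
From Stdlib Require Import FunctionalExtensionality PropExtensionality.
Set Implicit Arguments. Unset Strict Implicit. Unset Printing Implicit Defensive.
Import GRing.Theory.
Local Open Scope ring_scope.

Definition skew_field (K : unitRingType) : Prop :=
  forall x : K, x != 0 -> x \is a GRing.unit.

Definition skew_prod (K : unitRingType) (Z : Type) (act : K -> Z -> Z)
  (f g : Z -> K) : Z -> K :=
  fun z => if g z == 0 then 0 else f (act (g z) z) * g z.

Definition skew_convex (K : unitRingType) (Z : Type) (act : K -> Z -> Z)
  (f : Z -> K) : Prop :=
  forall a b : K,
    skew_prod act f (fun _ => a + b) =
    (fun z => skew_prod act f (fun _ => a) z + skew_prod act f (fun _ => b) z).

Record subgroup_units (K : unitRingType) (G : K -> Prop) : Prop := {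
  sg_nz : forall x, G x -> x != 0;
  sg_1 : G 1;
  sg_mul : forall x y, G x -> G y -> G (x * y);
  sg_inv : forall x, G x -> G x^-1 }.

Definition right_G_linear (K : unitRingType) (G : K -> Prop) (phi : K -> K) : Prop :=
  (forall a b, phi (a - b) = phi a - phi b) /\
  (forall a c, G c -> phi (a * c) = phi a * c).

Definition lcoset (K : unitRingType) (G : K -> Prop) (x : K) : K -> Prop :=
  fun y => exists g, G g /\ y = x * g.

Record coset (K : unitRingType) (G : K -> Prop) := Coset {
  coset_set : K -> Prop;
  coset_ex : exists x : K, x != 0 /\ coset_set = lcoset G x }.

Definition mkcoset (K : unitRingType) (G : K -> Prop) (x : K) (hx : x != 0)
  : coset G := @Coset K G (lcoset G x) (ex_intro _ x (conj hx erefl)).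

Lemma coset_act_ex (K : unitRingType) (G : K -> Prop) (hK : skew_field K)
  (a : K) (C : coset G) :
  exists x : K, x != 0 /\
   (if a == 0 then coset_set C else fun y => exists z, coset_set C z /\ y = a * z)
   = lcoset G x.
Proof.
case: C => S [x [hx eS]] /=; rewrite eS.
case: eqP => [_|/eqP ha]; first by exists x.
exists (a * x); split.
  apply/eqP => h; move: (hK a ha) => ua.
  by move: hx; rewrite -(mulKr ua x) h mulr0 eqxx.
apply: functional_extensionality => y; apply: propositional_extensionality.
split.
  by move=> [z [[g [Gg ->]] ->]]; exists g; rewrite mulrA.
by move=> [g [Gg ->]]; exists (x * g); split; [exists g | rewrite mulrA].
Qed.

(* The action a(bG) = (ab)G of K^* on K^*/G (trivially extended to a = 0,
   where it is never used). *)
Definition coset_act (K : unitRingType) (G : K -> Prop) (hK : skew_field K)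
  (a : K) (C : coset G) : coset G :=
  @Coset K G _ (coset_act_ex hK a C).

From mathcomp Require Import all_boot all_order all_algebra.
From Stdlib Require Import ProofIrrelevance ClassicalEpsilon FunctionalExtensionality PropExtensionality.
Import GRing.Theory.
Local Open Scope ring_scope.
Set Implicit Arguments. Unset Strict Implicit.

(* To every f : K^*/G -> K attach the map phi_f(x) = f(xG) x (and phi_f(0) = 0),
   so that f(xG) = phi_f(x) x^-1 by construction.  The whole proposition is
   then a dictionary between f and phi_f:
   - evaluating the skew product f <> a at xG gives phi_f(a x) x^-1, hence f is
     skew convex iff phi_f is additive (test at the coset 1G for one direction);
   - phi_f(x c) = phi_f(x) c for c in G because xG = (xc)G, so additivity of
     phi_f already makes it right G-linear;
   - a right G-linear phi representing f must agree with phi_f (uniqueness);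
   - phi_{f+g} = phi_f + phi_g, phi_{f<>g} = phi_f o phi_g, phi_1 = id, and f is
     recovered from phi_f, so f |-> phi_f is an injective ring morphism;
   - any right G-linear phi is phi_f for f(C) = phi(r) r^-1, r a chosen
     representative of C; G-linearity makes this independent of the choice. *)

Section SubtractiveMaps.

Variables (U V : zmodType) (phi : U -> V).

Hypothesis phiB : {morph phi : a b / a - b}.

Lemma subtractive0 : phi 0 = 0.
Proof. by rewrite -(subrr 0) phiB subrr. Qed.

Lemma subtractiveD : {morph phi : a b / a + b}.
Proof.
have phiN b : phi (- b) = - phi b by rewrite -sub0r phiB subtractive0 sub0r.
by move=> a b; rewrite -{1}[b]opprK phiB phiN opprK.
Qed.

End SubtractiveMaps.

Lemma additiveB (U V : zmodType) (phi : U -> V) :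
  {morph phi : a b / a + b} -> {morph phi : a b / a - b}.
Proof.
move=> phiD a b.
have phi0 : phi 0 = 0 by apply: (@addrI _ (phi 0)); rewrite -phiD !addr0.
have phiN : phi (- b) = - phi b by apply/eqP; rewrite -addr_eq0 -phiD addNr phi0.
by rewrite phiD phiN.
Qed.

Section CosetSpace.

Variables (K : unitRingType) (hK : skew_field K) (G : K -> Prop).

Lemma coset_eq (C1 C2 : coset G) : coset_set C1 = coset_set C2 -> C1 = C2.
Proof.
case: C1 => S1 p1; case: C2 => S2 p2 /= E; subst S2.
by rewrite (proof_irrelevance _ p1 p2).
Qed.

Lemma coset_rep (C : coset G) : exists x (hx : x != 0), C = mkcoset G hx.
Proof. by case: (coset_ex C) => x [hx e]; exists x, hx; apply: coset_eq. Qed.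

Lemma mulf_neq0_skew (a b : K) : a != 0 -> b != 0 -> a * b != 0.
Proof.
move=> ha hb; apply/eqP => h; move: hb.
by rewrite -(mulKr (hK ha) b) h mulr0 eqxx.
Qed.

Lemma coset_act_mk (a x : K) (ha : a != 0) (hx : x != 0) (hax : a * x != 0) :
  coset_act hK a (mkcoset G hx) = mkcoset G hax.
Proof.
apply: coset_eq => /=; rewrite (negbTE ha).
apply: functional_extensionality => y; apply: propositional_extensionality.
split; first by move=> [z [[g [Gg ->]] ->]]; exists g; rewrite mulrA.
by move=> [g [Gg ->]]; exists (x * g); split; [exists g | rewrite mulrA].
Qed.

Lemma lcoset_mulG (HG : subgroup_units G) (x c : K) :
  G c -> lcoset G (x * c) = lcoset G x.
Proof.
move=> Gc; have uc : c \is a GRing.unit := hK (sg_nz HG Gc).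
apply: functional_extensionality => y; apply: propositional_extensionality.
split; first by move=> [g [Gg ->]]; exists (c * g); split; [apply: sg_mul | rewrite mulrA].
move=> [g [Gg ->]]; exists (c^-1 * g); split; first by apply: sg_mul => //; apply: sg_inv.
by rewrite -mulrA (mulVKr uc).
Qed.

Lemma coset_of_ex (x : K) :
  exists y : K, y != 0 /\ lcoset G (if x == 0 then 1 else x) = lcoset G y.
Proof.
exists (if x == 0 then 1 else x); split => //.
by case: (eqVneq x 0) => [_|hx] //; apply: oner_neq0.
Qed.

(* The total coset map x |-> xG, sending the irrelevant point 0 to 1G. *)
Definition coset_of (x : K) : coset G := Coset (coset_of_ex x).

Lemma coset_ofE (x : K) (hx : x != 0) : coset_of x = mkcoset G hx.
Proof. by apply: coset_eq => /=; rewrite (negbTE hx). Qed.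

Definition phif (f : coset G -> K) (x : K) : K :=
  if x == 0 then 0 else f (coset_of x) * x.

Lemma phif0 (f : coset G -> K) : phif f 0 = 0.
Proof. by rewrite /phif eqxx. Qed.

Lemma phifE (f : coset G -> K) (x : K) (hx : x != 0) :
  f (mkcoset G hx) = phif f x * x^-1.
Proof. by rewrite /phif (negbTE hx) (coset_ofE hx) mulrK //; apply: hK. Qed.

Lemma phif_inj (f g : coset G -> K) : phif f = phif g -> f = g.
Proof.
move=> E; apply: functional_extensionality => C.
by case: (coset_rep C) => x [hx ->]; rewrite !phifE E.
Qed.

Lemma skew_prod_constE (f : coset G -> K) (a x : K) (hx : x != 0) :
  skew_prod (coset_act hK) f (fun _ => a) (mkcoset G hx) = phif f (a * x) * x^-1.
Proof.
rewrite /skew_prod; case: eqP => [->|/eqP ha]; first by rewrite mul0r phif0 mul0r.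
have hax := mulf_neq0_skew ha hx.
rewrite (coset_act_mk ha hx hax) /phif (negbTE hax) (coset_ofE hax).
by rewrite mulrA mulrK //; apply: hK.
Qed.

Lemma skew_convex_phif (f : coset G -> K) :
  skew_convex (coset_act hK) f <-> {morph phif f : a b / a + b}.
Proof.
split.
  move=> hc a b; have := congr1 (fun h => h (mkcoset G (oner_neq0 K))) (hc a b).
  by rewrite /= !skew_prod_constE !mulr1 invr1 !mulr1.
move=> hadd a b; apply: functional_extensionality => C.
by case: (coset_rep C) => x [hx ->]; rewrite !skew_prod_constE mulrDl hadd mulrDl.
Qed.

Lemma phif_right_G_linear (HG : subgroup_units G) (f : coset G -> K) :
  skew_convex (coset_act hK) f -> right_G_linear G (phif f).
Proof.
move=> /skew_convex_phif hadd; split.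
  exact: additiveB.
move=> a c Gc; have hc := sg_nz HG Gc.
rewrite /phif; case: (eqVneq a 0) => [->|ha]; first by rewrite !mul0r eqxx.
have hac := mulf_neq0_skew ha hc.
rewrite (negbTE hac) (coset_ofE hac) (coset_ofE ha) mulrA.
by congr (f _ * _ * _); apply: coset_eq; apply: lcoset_mulG.
Qed.

Lemma rep_phif (f : coset G -> K) (phi : K -> K) :
  right_G_linear G phi ->
  (forall (x : K) (hx : x != 0), f (mkcoset G hx) = phi x * x^-1) ->
  phi = phif f.
Proof.
move=> [hsub _] hrep; apply: functional_extensionality => x.
rewrite /phif; case: eqP => [->|/eqP hx].
  exact: subtractive0.
by rewrite (coset_ofE hx) hrep mulrVK //; apply: hK.
Qed.

Lemma rep_skew_convex (f : coset G -> K) (phi : K -> K) :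
  right_G_linear G phi ->
  (forall (x : K) (hx : x != 0), f (mkcoset G hx) = phi x * x^-1) ->
  skew_convex (coset_act hK) f.
Proof.
move=> hlin hrep; apply/skew_convex_phif.
by rewrite -(rep_phif hlin hrep); apply: subtractiveD; case: hlin.
Qed.

Lemma phifD (f g : coset G -> K) :
  phif (fun C => f C + g C) = (fun x => phif f x + phif g x).
Proof.
apply: functional_extensionality => x.
by rewrite /phif; case: eqP => _; [rewrite addr0 | rewrite mulrDl].
Qed.

Lemma phif_skew_prod (f g : coset G -> K) :
  phif (skew_prod (coset_act hK) f g) = (fun x => phif f (phif g x)).
Proof.
apply: functional_extensionality => x; rewrite /phif.
case: (eqVneq x 0) => [_|hx]; first by rewrite eqxx.
rewrite /skew_prod (coset_ofE hx).
case: (eqVneq (g (mkcoset G hx)) 0) => [->|hg]; first by rewrite !mul0r eqxx.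
have hgx := mulf_neq0_skew hg hx.
by rewrite (negbTE hgx) (coset_act_mk hg hx hgx) (coset_ofE hgx) mulrA.
Qed.

Lemma phif1 : phif (fun _ => 1) = id.
Proof.
apply: functional_extensionality => x.
by rewrite /phif; case: eqP => [->|]; rewrite ?mul1r.
Qed.

Section Surjectivity.

Hypothesis HG : subgroup_units G.

Definition coset_repr (C : coset G) : K :=
  proj1_sig (constructive_indefinite_description _ (coset_ex C)).

Lemma coset_reprP (C : coset G) :
  coset_repr C != 0 /\ coset_set C = lcoset G (coset_repr C).
Proof. exact: proj2_sig (constructive_indefinite_description _ (coset_ex C)). Qed.

Lemma coset_repr_mk (x : K) (hx : x != 0) :
  exists2 c, G c & coset_repr (mkcoset G hx) = x * c.
Proof.
have [_ E] := coset_reprP (mkcoset G hx).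
have : lcoset G (coset_repr (mkcoset G hx)) (coset_repr (mkcoset G hx)).
  by exists 1; split; [exact: sg_1 | rewrite mulr1].
by rewrite -E => -[c [Gc ->]]; exists c.
Qed.

Definition fun_of_endo (phi : K -> K) (C : coset G) : K :=
  phi (coset_repr C) * (coset_repr C)^-1.

Lemma fun_of_endoE (phi : K -> K) (x : K) (hx : x != 0) :
  right_G_linear G phi -> fun_of_endo phi (mkcoset G hx) = phi x * x^-1.
Proof.
move=> [_ phiG]; rewrite /fun_of_endo; have [c Gc ->] := coset_repr_mk hx.
have uc : c \is a GRing.unit := hK (sg_nz HG Gc).
by rewrite phiG // invrM // ?mulrA ?mulrK //; apply: hK.
Qed.

Lemma phif_surj (phi : K -> K) :
  right_G_linear G phi ->
  exists2 f, skew_convex (coset_act hK) f & phif f = phi.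
Proof.
move=> hlin; have hrep := fun x hx => fun_of_endoE (x := x) hx hlin.
exists (fun_of_endo phi); first exact: rep_skew_convex hlin hrep.
by rewrite -(rep_phif hlin hrep).
Qed.

End Surjectivity.

End CosetSpace.

Theorem proposition2p7 (K : unitRingType) (hK : skew_field K)
  (G : K -> Prop) (HG : subgroup_units G) :
  (* (1) characterization and uniqueness of phi_f *)
  (forall f : coset G -> K,
     skew_convex (coset_act hK) f <->
     exists phi : K -> K, right_G_linear G phi /\
       forall (x : K) (hx : x != 0), f (mkcoset G hx) = phi x * x^-1) /\
  (forall f : coset G -> K, skew_convex (coset_act hK) f ->
     forall phi1 phi2 : K -> K,
       right_G_linear G phi1 ->
       (forall (x : K) (hx : x != 0), f (mkcoset G hx) = phi1 x * x^-1) ->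
       right_G_linear G phi2 ->
       (forall (x : K) (hx : x != 0), f (mkcoset G hx) = phi2 x * x^-1) ->
       phi1 = phi2) /\
  (* (2) f |-> phi_f is a ring isomorphism S(K^*/G) -> End(K_G) *)
  (exists Phi : (coset G -> K) -> (K -> K),
     (forall f, skew_convex (coset_act hK) f ->
        right_G_linear G (Phi f) /\
        forall (x : K) (hx : x != 0), f (mkcoset G hx) = Phi f x * x^-1) /\
     (forall f g, skew_convex (coset_act hK) f -> skew_convex (coset_act hK) g ->
        Phi (fun z => f z + g z) = (fun x => Phi f x + Phi g x)) /\
     (forall f g, skew_convex (coset_act hK) f -> skew_convex (coset_act hK) g ->
        Phi (skew_prod (coset_act hK) f g) = (fun x => Phi f (Phi g x))) /\
     Phi (fun _ => 1) = (fun x => x) /\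
     (forall f g, skew_convex (coset_act hK) f -> skew_convex (coset_act hK) g ->
        Phi f = Phi g -> f = g) /\
     (forall phi, right_G_linear G phi ->
        exists f, skew_convex (coset_act hK) f /\ Phi f = phi)).
Proof.
have phif_rep f : skew_convex (coset_act hK) f ->
    right_G_linear G (phif f) /\
    forall (x : K) (hx : x != 0), f (mkcoset G hx) = phif f x * x^-1.
  by move=> hf; split; [exact: phif_right_G_linear | exact: phifE].
split.
  move=> f; split; first by move/phif_rep => hf; exists (phif f).
  by case=> phi [hlin hrep]; exact: rep_skew_convex hlin hrep.
split.
  move=> f _ phi1 phi2 hlin1 hrep1 hlin2 hrep2.
  by rewrite (rep_phif hK hlin1 hrep1) (rep_phif hK hlin2 hrep2).
exists (@phif K G).
split; first exact: phif_rep.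
split; first by move=> f g _ _; apply: phifD.
split; first by move=> f g _ _; apply: phif_skew_prod.
split; first exact: phif1.
split; first by move=> f g _ _; apply: phif_inj.
by move=> phi /(phif_surj hK HG) [f hf <-]; exists f.
Qed.
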